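(* Let $|\!|\!|\cdot|\!|\!|$ be a norm on $X^n$, and $\mathbf{u}:=(\mathbf{u}_1,\ldots,\mathbf{u}_n)\in \mathbb{S}_X\times\ldots\times\mathbb{S}_X$ ($n$ copies of the unit sphere of $X$). Define $\psi_{\mathbf{u}}(t):=|\!|\!|(t_1\mathbf{u}_1,\ldots,t_{n}\mathbf{u}_n)|\!|\!|$ for all $t:=(t_1,\ldots,t_{n})\in\Omega_n$. (i) If $|\!|\!|\cdot|\!|\!|\in\mathbf{N}_{X^n}$, then $\psi_{\mathbf{u}}\in\mathbf{\Psi}_n$. (ii) If $|\!|\!|\cdot|\!|\!|\in\mathbf{N}^{\rm sc}_{X^n}$, then $\psi_{\mathbf{u}}\in\mathbf{\Psi}^{\rm sc}_{n}$.
   Context: Let $(X,\|\cdot\|)$ be a normed vector space, $n\ge2$. $\mathbf{N}_{X^n}$ is the family of norms $|\!|\!|\cdot|\!|\!|$ on $X^n$ satisfying (A1) $|\!|\!|(x_1,\ldots,x_n)|\!|\!|=|\!|\!|(\pm x_1,\ldots,\pm x_n)|\!|\!|$ for all $x\in X^n$ and all sign choices, and (A2) $|\!|\!|(0_X,\ldots,0_X,v,0_X,\ldots,0_X)|\!|\!|=\|v\|$ for all $v\in X$ in any $i$th position. $\mathbf{N}^{\rm sc}_{X^n}$ is the subclass of strictly convex norms in $\mathbf{N}_{X^n}$ (a norm is strictly convex if the norm of the sum of any two distinct unit vectors is $<2$). $\Omega_n:=\{t\in\mathbb{R}^n\mid t_i\ge0,\ \sum_i t_i=1\}$, $\Omega_n^\circ:=\{t\in\Omega_n\mid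 t_i<1\ \forall i\}$, $\mathbf{e}_i$ the standard unit vectors. $\mathbf{\Psi}_n$ is the class of convex continuous $\psi:\Omega_n\to\mathbb{R}$ with (B1) $\psi(\mathbf{e}_i)=1$ for all $i$ and (B2) $\psi(t)\ge(1-t_i)\psi\big(\frac{t_1}{1-t_i},\ldots,\frac{t_{i-1}}{1-t_i},0,\frac{t_{i+1}}{1-t_i},\ldots,\frac{t_n}{1-t_i}\big)$ for all $t\in\Omega_n^\circ$, $i=1,\ldots,n$; $\mathbf{\Psi}^{\rm sc}_n$ is its subclass of strictly convex functions. *)

From HB Require Import structures.
From mathcomp Require Import all_boot all_order all_algebra.
From mathcomp Require Import all_classical all_reals all_analysis.
Set Implicit Arguments. Unset Strict Implicit. Unset Printing Implicit Defensive.
Import Order.TTheory GRing.Theory Num.Theory.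
Import numFieldNormedType.Exports.
Local Open Scope classical_set_scope.
Local Open Scope ring_scope.

Section Defs.
Variables (R : realType) (X : normedModType R) (n : nat).

Definition is_norm (N : ('I_n -> X) -> R) : Prop :=
  [/\ forall x, N x = 0 -> x = (fun _ => 0),
      forall (a : R) x, N (fun i => a *: x i) = `|a| * N x &
      forall x y, N (fun i => x i + y i) <= N x + N y].

Definition strictly_convex_norm (N : ('I_n -> X) -> R) : Prop :=
  forall x y, N x = 1 -> N y = 1 -> x <> y -> N (fun i => x i + y i) < 2.

Definition in_NXn (N : ('I_n -> X) -> R) : Prop :=
  [/\ is_norm N,
      (forall (x : 'I_n -> X) (eps : 'I_n -> bool),
          N (fun i => (-1) ^+ eps i *: x i) = N x) &
      (forall (i : 'I_n) (v : X), N (fun j => if j == i then v else 0) = `|v|)].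

Definition in_NXn_sc (N : ('I_n -> X) -> R) : Prop :=
  in_NXn N /\ strictly_convex_norm N.

End Defs.

Section PsiDefs.
Variables (R : realType) (n : nat).

Definition Omega : set 'rV[R]_n :=
  [set t | (forall i, 0 <= t ord0 i) /\ \sum_(i < n) t ord0 i = 1].

Definition Omega_int : set 'rV[R]_n :=
  [set t | Omega t /\ forall i, t ord0 i < 1].

Definition e_vec (i : 'I_n) : 'rV[R]_n := \row_j (if j == i then 1 else 0).

Definition convex_on (psi : 'rV[R]_n -> R) : Prop :=
  forall s t (l : R), Omega s -> Omega t -> 0 <= l -> l <= 1 ->
    psi (l *: s + (1 - l) *: t) <= l * psi s + (1 - l) * psi t.

Definition strictly_convex_on (psi : 'rV[R]_n -> R) : Prop :=
  forall s t (l : R), Omega s -> Omega t -> s <> t -> 0 < l -> l < 1 ->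
    psi (l *: s + (1 - l) *: t) < l * psi s + (1 - l) * psi t.

Definition drop_coord (t : 'rV[R]_n) (i : 'I_n) : 'rV[R]_n :=
  \row_j (if j == i then 0 else t ord0 j / (1 - t ord0 i)).

Definition in_Psi (psi : 'rV[R]_n -> R) : Prop :=
  [/\ convex_on psi,
      {within Omega, continuous psi},
      (forall i, psi (e_vec i) = 1) &
      (forall t i, Omega_int t ->
          psi t >= (1 - t ord0 i) * psi (drop_coord t i))].

Definition in_Psi_sc (psi : 'rV[R]_n -> R) : Prop :=
  in_Psi psi /\ strictly_convex_on psi.

End PsiDefs.

Definition psi_u (R : realType) (X : normedModType R) (n : nat)
  (N : ('I_n -> X) -> R) (u : 'I_n -> X) : 'rV[R]_n -> R :=
  fun t => N (fun i => t ord0 i *: u i).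

(* Convexity of psi_u is the triangle inequality together with homogeneity,
   and (A2) with the triangle inequality gives N x <= sum_i |x_i|, which makes
   psi_u Lipschitz, hence continuous.  By (A1), the vector x with its i-th
   coordinate zeroed is the average of x and its reflection in that coordinate,
   so it has norm at most N x; rescaled by 1 - t_i this is (B2).  For strict
   convexity write psi_u(l s + (1-l) t) = N(a x + b y) with x, y the normalised
   vectors (s_i u_i)_i / psi_u(s), (t_i u_i)_i / psi_u(t) and
   a + b = l psi_u(s) + (1-l) psi_u(t); strict convexity of N makes this strict
   unless x = y, and since s, t lie in Omega_n, x = y forces s = t. *)

From mathcomp Require Import all_boot all_order all_algebra.
From mathcomp Require Import all_classical all_reals all_analysis.
From mathcomp Require Import lra.
Import Order.TTheory GRing.Theory Num.Theory.
Import numFieldNormedType.Exports.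
Local Open Scope ring_scope.
Set Implicit Arguments. Unset Strict Implicit.

Section NormOnProduct.
Variables (R : realType) (X : normedModType R) (n : nat) (N : ('I_n -> X) -> R).
Hypothesis normN : is_norm N.

Lemma normNZ a x : N (fun i => a *: x i) = `|a| * N x.
Proof. by case: normN. Qed.

Lemma normN_triangle x y : N (fun i => x i + y i) <= N x + N y.
Proof. by case: normN. Qed.

Lemma normN0 : N (fun=> 0) = 0.
Proof.
have := normNZ 0 (fun=> 0); rewrite normr0 mul0r => <-.
by congr N; apply: funext => i; rewrite scale0r.
Qed.

Lemma normN_ge0 x : 0 <= N x.
Proof.
have := normN_triangle x (fun i => (-1) *: x i).
have -> : (fun i => x i + (-1) *: x i) = (fun=> 0).
  by apply: funext => i; rewrite scaleN1r subrr.
rewrite normN0 normNZ normrN normr1 mul1r; lra.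
Qed.

Lemma normN_sum (I : Type) (r : seq I) (f : I -> 'I_n -> X) :
  N (fun j => \sum_(i <- r) f i j) <= \sum_(i <- r) N (f i).
Proof.
elim: r => [|a r IHr].
  have -> : (fun j => \sum_(i <- [::]) f i j) = (fun=> 0).
    by apply: funext => j; rewrite big_nil.
  by rewrite big_nil normN0.
have -> : (fun j => \sum_(i <- a :: r) f i j)
    = (fun j => f a j + \sum_(i <- r) f i j).
  by apply: funext => j; rewrite big_cons.
by rewrite big_cons (le_trans (normN_triangle _ _)) // lerD2l.
Qed.

Lemma normN_le_sum_coord :
    (forall i v, N (fun j => if j == i then v else 0) = `|v|) ->
  forall x, N x <= \sum_i `|x i|.
Proof.
move=> normN_coord x; rewrite -(eq_bigr _ (fun i _ => normN_coord i (x i))).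
have {1}-> : x = (fun j => \sum_i (if j == i then x i else 0)).
  apply: funext => j; rewrite (bigD1 j) //= eqxx big1 ?addr0 // => i /negbTE.
  by rewrite eq_sym => ->.
exact: normN_sum.
Qed.

Lemma normN_zero_coord_le :
    (forall x (eps : 'I_n -> bool), N (fun i => (-1) ^+ eps i *: x i) = N x) ->
  forall x i, N (fun j => if j == i then 0 else x j) <= N x.
Proof.
move=> normN_sign x i.
have -> : (fun j => if j == i then 0 else x j)
    = (fun j => 2^-1 *: (x j + (-1) ^+ (j == i) *: x j)).
  apply: funext => j; case: eqP => _; first by rewrite expr1 scaleN1r subrr scaler0.
  rewrite expr0 scale1r -mulr2n -[x j *+ 2]scaler_nat scalerA.
  by rewrite mulVf ?scale1r ?pnatr_eq0.
rewrite (normNZ _ (fun j => x j + _)) ger0_norm ?invr_ge0 ?ler0n //.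
rewrite ler_pdivrMl ?ltr0n // (le_trans (normN_triangle _ _)) //.
rewrite (normN_sign x (fun j => j == i)); lra.
Qed.

Lemma normN_convex_lt :
    strictly_convex_norm N ->
  forall a b x y, 0 < a -> 0 < b -> N x = 1 -> N y = 1 -> x <> y ->
  N (fun i => a *: x i + b *: y i) < a + b.
Proof.
move=> sc a b x y; wlog le_ab : a b x y / a <= b.
  move=> wlog_ab a0 b0 Nx Ny xy; have [le_ab|/ltW le_ba] := lerP a b.
    exact: wlog_ab.
  have -> : (fun i => a *: x i + b *: y i) = (fun i => b *: y i + a *: x i).
    by apply: funext => i; rewrite addrC.
  by rewrite addrC; apply: wlog_ab => // yx; apply: xy.
move=> a0 b0 Nx Ny xy.
have -> : (fun i => a *: x i + b *: y i)
    = (fun i => a *: (x i + y i) + (b - a) *: y i).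
  by apply: funext => i; rewrite scalerDr -addrA -scalerDl [a + _]addrC subrK.
apply: (le_lt_trans (normN_triangle _ _)).
rewrite (normNZ _ (fun i => x i + y i)) normNZ Ny (gtr0_norm a0).
rewrite ger0_norm ?subr_ge0 //.
have := sc _ _ Nx Ny xy; nra.
Qed.

End NormOnProduct.

Lemma klipschitz_continuous (R : realFieldType) (V : pseudoMetricNormedZmodType R)
    (f : V -> R) (k : R) :
  (forall x y, `|f x - f y| <= k * `|x - y|) -> continuous f.
Proof.
move=> f_lip x; apply/cvgrPdist_lt => e e0.
set c := `|k| + 1; have c0 : 0 < c by rewrite ltr_wpDl.
have lip_c y : `|f x - f y| <= c * `|x - y|.
  by rewrite (le_trans (f_lip x y)) // ler_wpM2r // (le_trans (ler_norm k)) ?lerDl.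
near=> y; apply: (le_lt_trans (lip_c y)); rewrite -ltr_pdivlMl //.
near: y; apply: (@cvgr_dist_lt _ _ _ _ (nbhs_filter x) id x cvg_id).
by rewrite mulr_gt0 ?invr_gt0.
Unshelve. all: end_near.
Qed.

Lemma mx_norm_entry_le (R : realType) (n : nat) (s : 'rV[R]_n) i : `|s ord0 i| <= `|s|.
Proof.
rewrite [leRHS]/Num.norm /= mx_normrE; apply/bigmax_geP; right.
by exists (ord0, i).
Qed.

Section PsiU.
Variables (R : realType) (X : normedModType R) (n : nat).
Variables (N : ('I_n -> X) -> R) (u : 'I_n -> X).
Hypotheses (normN : is_norm N) (unit_u : forall i, `|u i| = 1).
Local Notation psi := (psi_u N u).

Lemma psi_u_combination (s t : 'rV[R]_n) (a b : R) :
  psi (a *: s + b *: t)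
  = N (fun i => a *: (s ord0 i *: u i) + b *: (t ord0 i *: u i)).
Proof. by congr N; apply: funext => i; rewrite !mxE !scalerA -scalerDl. Qed.

Lemma psi_u_convex : convex_on psi.
Proof.
move=> s t l _ _ l0 l1; rewrite psi_u_combination.
rewrite (le_trans (normN_triangle normN _ _)) //.
by rewrite !(normNZ normN) ger0_norm // ger0_norm ?subr_ge0.
Qed.

Lemma psi_u_lipschitz :
    (forall i v, N (fun j => if j == i then v else 0) = `|v|) ->
  forall s t, `|psi s - psi t| <= n%:R * `|s - t|.
Proof.
move=> normN_coord.
suff psi_le s t : psi s <= psi t + n%:R * `|s - t|.
  by move=> s t; have := psi_le t s; rewrite distrC ler_distl psi_le andbT; lra.
have -> : psi s = N (fun i => t ord0 i *: u i + (s - t) ord0 i *: u i).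
  by congr N; apply: funext => i; rewrite -scalerDl !mxE addrCA subrr addr0.
rewrite (le_trans (normN_triangle normN _ _)) // lerD2l.
rewrite (le_trans (normN_le_sum_coord normN normN_coord _)) //.
rewrite -[n in n%:R]card_ord mulr_natl -sumr_const; apply: ler_sum => i _.
by rewrite normrZ unit_u mulr1 mx_norm_entry_le.
Qed.

Lemma psi_u_e_vec :
    (forall i v, N (fun j => if j == i then v else 0) = `|v|) ->
  forall i, psi (e_vec R i) = 1.
Proof.
move=> normN_coord i; rewrite -(unit_u i) -(normN_coord i); congr N.
by apply: funext => j; rewrite mxE; case: eqP => [->|_]; rewrite ?scale1r ?scale0r.
Qed.

Lemma psi_u_drop_coord :
    (forall x (eps : 'I_n -> bool), N (fun i => (-1) ^+ eps i *: x i) = N x) ->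
  forall (t : 'rV[R]_n) i, t ord0 i < 1 ->
  (1 - t ord0 i) * psi (drop_coord t i) <= psi t.
Proof.
move=> normN_sign t i ti_lt1; have ti_gt0 : 0 < 1 - t ord0 i by rewrite subr_gt0.
rewrite -[1 - _]gtr0_norm // -normNZ //.
have -> : (fun j => (1 - t ord0 i) *: (drop_coord t i ord0 j *: u j))
    = (fun j => if j == i then 0 else t ord0 j *: u j).
  apply: funext => j; rewrite mxE; case: eqP => _; first by rewrite scale0r scaler0.
  by rewrite scalerA mulrC divfK ?gt_eqF.
exact: normN_zero_coord_le.
Qed.

Lemma psi_u_gt0 t : Omega t -> 0 < psi t.
Proof.
case=> _ sum_t; rewrite lt_def normN_ge0 // andbT; apply/eqP => psi_t0.
have [N_eq0 _ _] := normN.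
have t0 j : t ord0 j = 0.
  have /(congr1 (fun x => `|x j|)) := N_eq0 _ psi_t0.
  by rewrite normrZ unit_u mulr1 normr0 => /normr0_eq0.
by move: sum_t; rewrite big1 // => /eqP; rewrite eq_sym oner_eq0.
Qed.

Lemma Omega_scaled_coord_inj s t (a b : R) : Omega s -> Omega t -> a != 0 ->
  (fun i => a *: (s ord0 i *: u i)) = (fun i => b *: (t ord0 i *: u i)) -> s = t.
Proof.
move=> [_ sum_s] [_ sum_t] a0 st.
have coord_eq j : a * s ord0 j = b * t ord0 j.
  have : (a * s ord0 j - b * t ord0 j) *: u j = 0.
    by rewrite scalerBl -!scalerA (congr1 (fun x => x j) st) subrr.
  move/eqP; rewrite scaler_eq0 -(normr_eq0 (u j)) unit_u oner_eq0 orbF subr_eq0.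
  by move/eqP.
have ab : a = b.
  by rewrite -[a]mulr1 -[b]mulr1 -{1}sum_s -sum_t !mulr_sumr; apply: eq_bigr.
by apply/rowP => j; apply: (mulfI a0); rewrite coord_eq ab.
Qed.

Lemma psi_u_strictly_convex : strictly_convex_norm N -> strictly_convex_on psi.
Proof.
move=> scN s t l Os Ot st l0 l1.
have [ps pt] := (psi_u_gt0 Os, psi_u_gt0 Ot).
pose w (r : 'rV[R]_n) i := (psi r)^-1 *: (r ord0 i *: u i).
have Nw r : 0 < psi r -> N (w r) = 1.
  by move=> pr; rewrite normNZ // gtr0_norm ?invr_gt0 // mulVf ?gt_eqF.
have -> : psi (l *: s + (1 - l) *: t)
    = N (fun i => (l * psi s) *: w s i + ((1 - l) * psi t) *: w t i).
  rewrite psi_u_combination; congr N; apply: funext => i.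
  by rewrite !scalerA !mulfK ?gt_eqF.
apply: normN_convex_lt => //; rewrite ?mulr_gt0 ?subr_gt0 ?Nw //.
move=> wst; apply: st; apply: (Omega_scaled_coord_inj Os Ot _ wst).
by rewrite invr_eq0 gt_eqF.
Qed.

Lemma psi_u_in_Psi : in_NXn N -> in_Psi psi.
Proof.
case=> _ normN_sign normN_coord; split.
- exact: psi_u_convex.
- exact/continuous_subspaceT/klipschitz_continuous/psi_u_lipschitz.
- exact: psi_u_e_vec.
- by move=> t i [_ ti_lt1]; apply: psi_u_drop_coord.
Qed.

End PsiU.

Theorem theorem2p9 (R : realType) (X : normedModType R) (n : nat)
  (hn : (2 <= n)%N) (N : ('I_n -> X) -> R) (hN : is_norm N)
  (u : 'I_n -> X) (hu : forall i, `|u i| = 1) :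
  (in_NXn N -> in_Psi (psi_u N u)) /\
  (in_NXn_sc N -> in_Psi_sc (psi_u N u)).
Proof.
split; first exact: psi_u_in_Psi.
by case=> N_in scN; split; [exact: psi_u_in_Psi | exact: psi_u_strictly_convex].
Qed.
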